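(* Let $T$ be an iso-unique zero forcing tree, let $\mathcal{P}$ be a minimum path cover of $T$, and let $P: x_1,\ldots,x_\ell$ be a path in $\mathcal{P}$. Let $p=\frac{\ell+1}{2}$ if $\ell$ is odd and $p=\frac{\ell}{2}$ if $\ell$ is even. (a) If $\ell$ is odd, then the connected components of $T-x_p$ that contain $x_{p-1}$ and $x_{p+1}$, respectively, are isomorphic. (b) If $\ell$ is even, then the connected components of $T-x_px_{p+1}$ that contain $x_p$ and $x_{p+1}$, respectively, are isomorphic. Moreover, there is an automorphism of $T$ that maps $x_1$ to $x_\ell$ and $x_\ell$ to $x_1$.
   Context: Zero forcing: in a graph $G$, starting with an initial set $S\subseteq V(G)$ of active vertices, repeatedly apply the rule: if an active vertex $u$ has exactly one non-active neighbor $v$, then $v$ becomes active. $S$ is a zero forcing set if eventually all vertices become active; a minimum zero forcing set is one of minimum size. A graph is an iso-unique zero forcing graph if for every two minimum zero forcing sets $A,B$ there is an automorphism $\phi$ with $\phi(A)=B$. A path cover of a tree $T$ is a set of vertex-disjoint paths of $T$ (a single vertex counts as a path) covering all vertices of $T$; it is minimum if no path cover has fewer paths. $P:x_1,\ldots,x_\ell$ denotes the path with vertices $x_1,\dots,x_\ell$ and edges $x_ix_{i+1}$. *)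

From mathcomp Require Import all_boot all_fingroup.
Set Implicit Arguments. Unset Strict Implicit. Unset Printing Implicit Defensive.

Section Graphs.
Variable T : finType.
Variable e : rel T.

Definition simple_graph := symmetric e /\ irreflexive e.

Definition connected_graph := forall x y : T, connect e x y.

Definition acyclic_graph :=
  forall (x : T) (s : seq T), 2 <= size s -> uniq (x :: s) -> path e x s ->
    ~~ e (last x s) x.

Definition is_tree := [/\ simple_graph, connected_graph & acyclic_graph].

Definition zf_step (S : {set T}) : {set T} :=
  S :|: [set v | [exists u in S, [&& e u v, v \notin S &
            [forall w, (e u w && (w \notin S)) ==> (w == v)]]]].

Definition zero_forcing (S : {set T}) := exists n, iter n zf_step S = setT.

Definition min_zero_forcing (S : {set T}) :=
  zero_forcing S /\ forall S' : {set T}, zero_forcing S' -> #|S| <= #|S'|.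

Definition automorphism (phi : {perm T}) := forall x y, e (phi x) (phi y) = e x y.

Definition iso_unique_zf :=
  forall A B : {set T}, min_zero_forcing A -> min_zero_forcing B ->
    exists2 phi : {perm T}, automorphism phi & phi @: A = B.


Definition graph_path (s : seq T) :=
  if s is h :: t then uniq s && path e h t else false.

Definition path_cover (P : seq (seq T)) :=
  (forall s, s \in P -> graph_path s) /\
  uniq (flatten P) /\ (forall v : T, v \in flatten P).

Definition min_path_cover (P : seq (seq T)) :=
  path_cover P /\ forall Q, path_cover Q -> size P <= size Q.

Definition component (r : rel T) (y : T) : {set T} := [set z | connect r y z].

Definition del_vertex (x : T) : rel T := fun a b => [&& e a b, a != x & b != x].

Definition del_edge (x y : T) : rel T :=
  fun a b => e a b && ~~ (((a == x) && (b == y)) || ((a == y) && (b == x))).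

Definition iso_induced (A B : {set T}) :=
  exists f : T -> T, [/\ {in A &, injective f}, f @: A = B &
     {in A &, forall a b, e (f a) (f b) = e a b}].

End Graphs.

(* The heads of the paths of a path cover of a forest form a zero forcing set:
   if the forcing process stalled, one could build a walk that never
   backtracks.  Conversely the forcing chains of a zero forcing set form a path
   cover.  Hence the heads of a minimum path cover form a minimum zero forcing
   set, and so do the heads of the cover obtained by reversing the path
   s = x_1 ... x_l.  Iso-uniqueness gives an automorphism phi mapping the first
   set onto the second; as x_1 is the only head lost and x_l the only one
   gained, some power of phi maps x_1 to x_l.  An automorphism of a tree fixes
   a vertex or flips an edge, and swapping the corresponding branches yields
   an automorphism exchanging x_1 and x_l.  By uniqueness of paths in a tree it
   reverses s, so it fixes its middle vertex or flips its middle edge and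
   exchanges the two sides. *)

From mathcomp Require Import all_boot all_fingroup.
From mathcomp Require Import zify.
Set Implicit Arguments. Unset Strict Implicit. Unset Printing Implicit Defensive.

Lemma connect_homo (T U : finType) (r : rel T) (r' : rel U) (f : T -> U) :
  (forall a b, r a b -> r' (f a) (f b)) ->
  forall a b, connect r a b -> connect r' (f a) (f b).
Proof.
move=> fr a b /connectP [p pp ->]; apply/connectP; exists (map f p).
  exact: homo_path pp.
by rewrite last_map.
Qed.

Lemma uniq_flatten_map (A B : eqType) (g : A -> seq B) r : uniq r ->
  (forall x, x \in r -> uniq (g x)) ->
  (forall x y z, x \in r -> y \in r -> z \in g x -> z \in g y -> x = y) ->
  uniq (flatten (map g r)).
Proof.
elim: r => //= x r IH /andP [xr ur] g_uniq g_disj.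
rewrite cat_uniq g_uniq ?mem_head //= IH //; last first.
- by move=> a b z ar br; apply: g_disj; rewrite inE ?ar ?br orbT.
- by move=> a ar; apply: g_uniq; rewrite inE ar orbT.
rewrite andbT; apply/hasPn => z /flatten_mapP [y yr zy]; apply/negP => zx.
have xy : x = y by apply: (g_disj x y z) => //; rewrite inE ?eqxx ?yr ?orbT.
by rewrite xy yr in xr.
Qed.

Lemma head_rev (T : Type) (x0 : T) s : head x0 (rev s) = last x0 s.
Proof. by case/lastP: s => // s y; rewrite rev_rcons last_rcons. Qed.

Lemma head_graph_path (T : finType) (e : rel T) x0 s : graph_path e s -> head x0 s \in s.
Proof. by case: s => // h t _; rewrite mem_head. Qed.

Section Automorphisms.
Variables (T : finType) (e : rel T).

Lemma automorphismV (phi : {perm T}) : automorphism e phi -> automorphism e phi^-1%g.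
Proof. by move=> phi_e a b; rewrite -phi_e !permKV. Qed.

Lemma automorphismX (phi : {perm T}) k : automorphism e phi -> automorphism e (phi ^+ k)%g.
Proof.
move=> phi_e; elim: k => [|k IH] a b; first by rewrite expg0 !perm1.
by rewrite expgS !permM IH phi_e.
Qed.

Lemma component_perm (sg : {perm T}) (r : rel T) y :
  (forall a b, r (sg a) (sg b) = r a b) -> sg @: component r y = component r (sg y).
Proof.
move=> sg_r; apply/setP => z; rewrite inE; apply/imsetP/idP.
  by move=> [z' ]; rewrite inE => yz' ->; apply: connect_homo yz' => a b; rewrite sg_r.
move=> yz; exists (sg^-1 z)%g; last by rewrite permKV.
rewrite inE -{1}(permK sg y); apply: connect_homo yz => a b.
by rewrite -{1}(permKV sg a) -{1}(permKV sg b) sg_r.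
Qed.

Lemma iso_induced_component (sg : {perm T}) (r : rel T) y :
  automorphism e sg -> (forall a b, r (sg a) (sg b) = r a b) ->
  iso_induced e (component r y) (component r (sg y)).
Proof.
move=> sg_e sg_r; exists sg; split; last by move=> a b _ _; apply: sg_e.
- by move=> a b _ _; apply: perm_inj.
- exact: component_perm.
Qed.

Lemma del_vertex_perm (sg : {perm T}) w : automorphism e sg -> sg w = w ->
  forall a b, del_vertex e w (sg a) (sg b) = del_vertex e w a b.
Proof. by move=> sg_e sgw a b; rewrite /del_vertex sg_e -{1 2}sgw !(inj_eq perm_inj). Qed.

Lemma del_edge_perm (sg : {perm T}) u v : automorphism e sg -> sg u = v -> sg v = u ->
  forall a b, del_edge e u v (sg a) (sg b) = del_edge e u v a b.
Proof.
move=> sg_e sgu sgv a b.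
have sg_eq z c c' : sg c' = c -> (sg z == c) = (z == c') by move=> <-; rewrite (inj_eq perm_inj).
by rewrite /del_edge sg_e !(sg_eq _ _ _ sgu) !(sg_eq _ _ _ sgv) orbC.
Qed.

End Automorphisms.

Section Acyclic.
Variables (T : finType) (e : rel T).
Hypotheses (e_sym : symmetric e) (e_irr : irreflexive e) (e_acyc : acyclic_graph e).

(* Iterating such a map from x ends in a cycle of f, which would be a cycle of
   length at least 3 in the graph. *)
Lemma no_nonbacktracking_map (U : pred T) (f : T -> T) x :
  x \in U -> {homo f : v / v \in U} -> {in U, forall v, e v (f v)} ->
  {in U, forall v, f (f v) != v} -> False.
Proof.
move=> xU fU e_f f_nbt.
have iterU n v : v \in U -> iter n f v \in U by elim: n => // n IH /IH /fU.
have /trajectP [i i_lt iter_i] := looping_order f x.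
set y := iter i f x; have yU : y \in U by apply: iterU.
have cyc : fcycle f (fingraph.orbit f y).
  apply/(orbitPcycle 0 3); exists (fingraph.order f x - i).-1.
  by rewrite prednK ?subn_gt0 // /y -iterD subnK ?iter_i // ltnW.
have fpath a s : a \in U -> path (frel f) a s -> path e a s && (last a s \in U).
  elim: s a => [|b s IH] a aU //= /andP [/eqP fab /(IH b)].
  by rewrite -fab e_f // fU //; apply.
move: cyc (fingraph.orbit_uniq f y); rewrite /fingraph.orbit -orderSpred /=.
set s := traject f (f y) _; rewrite rcons_path => /andP [cyc /eqP lst] uq.
have /andP [pe lU] := fpath _ _ yU cyc.
have := e_acyc (x := y) (s := s).
case: s uq pe cyc lst lU => [|a [|b s]] //= uq pe cyc lst lU.
- by move: (e_f _ yU); rewrite lst e_irr.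
- by case/andP: cyc => /eqP fya _; move: (f_nbt _ yU); rewrite fya lst eqxx.
by rewrite uq pe -lst e_f // => /(_ isT isT isT).
Qed.

Lemma del_vertex_sym w : symmetric (del_vertex e w).
Proof. by move=> a b; rewrite /del_vertex e_sym [(a != w) && _]andbC. Qed.

Lemma del_edge_sym c d : symmetric (del_edge e c d).
Proof.
by move=> a b; rewrite /del_edge e_sym (andbC (b == c)) (andbC (b == d)) orbC.
Qed.

Lemma path_del_vertex w a q : a != w ->
  path (del_vertex e w) a q = path e a q && all (predC1 w) q.
Proof.
elim: q a => //= b q IH a aw; rewrite {1}/del_vertex aw /=.
by case: (eqVneq b w) => [->|bw]; rewrite ?andbF // IH // !andbT andbA.
Qed.

Lemma connect_del_vertex_neq w y z : connect (del_vertex e w) y z -> y != w -> z != w.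
Proof.
move=> /connectP [q qp ->] yw; move: qp; rewrite path_del_vertex // => /andP [_].
by case/lastP: q => //= q z'; rewrite last_rcons all_rcons => /andP [].
Qed.

Lemma del_vertex_disconnects w u v :
  e w u -> e w v -> u != v -> ~~ connect (del_vertex e w) u v.
Proof.
move=> ewu ewv uv; apply/negP => /connectP [p pp lp].
move: lp; case: (shortenP pp) => q qp quq _ lq.
have uw : u != w by apply: contraTneq ewu => ->; rewrite e_irr.
move: qp; rewrite path_del_vertex // => /andP [qp qw].
case: q qp quq lq qw => [|a q] qp quq lq qw; first by rewrite lq eqxx in uv.
have uq : uniq [:: w, u, a & q].
  rewrite cons_uniq quq andbT inE negb_or eq_sym uw /=.
  by apply/negP => /(allP qw); rewrite /= eqxx.
have := e_acyc (x := w) (s := u :: a :: q) isT uq.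
by rewrite /= ewu; move: qp lq => /= -> <-; rewrite e_sym ewv => /(_ isT).
Qed.

Lemma del_edge_disconnects c d : e c d -> ~~ connect (del_edge e c d) c d.
Proof.
move=> ecd; apply/negP => /connectP [p pp lp].
move: lp; case: (shortenP pp) => q qp quq _ lq.
have qe : path e c q by apply: sub_path qp => a b /andP [].
case: q qp quq lq qe => [|a [|b q]] qp quq lq qe.
- by move: ecd; rewrite lq e_irr.
- by move: qp; rewrite /= in lq; rewrite /= -lq /del_edge ecd !eqxx.
by have := e_acyc (s := [:: a, b & q]) isT quq qe; rewrite /= in lq *; rewrite -lq e_sym ecd.
Qed.

Lemma acyclic_path_unique a p q :
  uniq (a :: p) -> path e a p -> uniq (a :: q) -> path e a q ->
  last a p = last a q -> p = q.
Proof.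
elim: p a q => [|u p IH] a [|v q] //.
- by rewrite cons_uniq => _ _ /andP [aq _] _ /= la; move: aq; rewrite la mem_last.
- by rewrite cons_uniq => /andP [ap _] _ _ _ /= la; move: ap; rewrite -la mem_last.
rewrite ![uniq (a :: _ :: _)]cons_uniq => /andP [ap up] /andP [eau pp] /andP [aq vq]
  /andP [eav pq]; rewrite /= => luv.
have [vu|uv] := eqVneq u v; first by subst v; congr (_ :: _); apply: (IH u).
have avoid r b : a \notin b :: r -> path e b r -> connect (del_vertex e a) b (last b r).
  rewrite inE negb_or eq_sym => /andP [ba ar] br; apply/connectP; exists r => //.
  by rewrite path_del_vertex // br; apply/allP => z zr; apply: contraNneq ar => <-.
case/negP: (del_vertex_disconnects eau eav uv).
apply: connect_trans (avoid _ _ ap pp) _.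
by rewrite luv (sym_connect_sym (del_vertex_sym a)) avoid.
Qed.

End Acyclic.

Section Tree.
Variables (T : finType) (e : rel T).
Hypotheses (e_sym : symmetric e) (e_irr : irreflexive e) (e_acyc : acyclic_graph e).
Hypothesis e_conn : connected_graph e.

Lemma first_step v t : v != t -> exists2 u, e v u & connect (del_vertex e v) u t.
Proof.
move=> vt; have /connectP [p pp lp] := e_conn v t.
move: lp; case: (shortenP pp) => [[|u q] qp quq _ lq]; first by rewrite lq eqxx in vt.
case/andP: qp => evu uq; exists u => //; apply/connectP; exists q => //.
move: quq; rewrite cons_uniq inE negb_or => /andP [/andP [vu vq] _].
rewrite path_del_vertex 1?eq_sym //; apply/andP; split; first exact: uq.
apply/allP => z zq /=.
by apply: contraNneq vq => <-.
Qed.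

Lemma automorphism_fix_or_flip (phi : {perm T}) (x0 : T) : automorphism e phi ->
  (exists w, phi w = w) \/ (exists c d, [/\ e c d, phi c = d & phi d = c]).
Proof.
move=> phi_e.
have [w /eqP|nofix] := pickP (fun w => phi w == w); first by left; exists w.
have [[c d] /and3P [ecd /eqP cd /eqP dc]|noflip] :=
  pickP (fun cd : T * T => [&& e cd.1 cd.2, phi cd.1 == cd.2 & phi cd.2 == cd.1]).
  by right; exists c, d.
exfalso.
pose f v := odflt v [pick u | e v u && connect (del_vertex e v) u (phi v)].
have f_spec v : e v (f v) && connect (del_vertex e v) (f v) (phi v).
  rewrite /f; case: pickP => [//|none].
  have [|u evu uphi] := first_step (v := v) (t := phi v); first by rewrite eq_sym nofix.
  by move: (none u); rewrite evu uphi.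
apply: (no_nonbacktracking_map e_irr e_acyc (U := predT) (f := f) (x := x0)) => // v _.
  by case/andP: (f_spec v).
apply/eqP => ffv; set u := f v in ffv.
(* Deleting the edge uv separates phi v (joined to u) from phi u (joined to v),
   although phi v and phi u are adjacent. *)
have /andP [evu vu_phi] := f_spec v; have /andP [euv uv_phi] := f_spec u.
rewrite ffv in euv uv_phi.
have to_del_edge w a b : w = u \/ w = v -> del_vertex e w a b -> del_edge e u v a b.
  move=> wuv /and3P [eab aw bw]; rewrite /del_edge eab /=.
  by case: wuv => <-; rewrite (negbTE aw) (negbTE bw) ?andbF.
have cu : connect (del_edge e u v) u (phi v).
  by apply: connect_sub vu_phi => a b /(to_del_edge v) ab; apply/connect1/ab; right.
have cv : connect (del_edge e u v) v (phi u).
  by apply: connect_sub uv_phi => a b /(to_del_edge u) ab; apply/connect1/ab; left.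
have [D|] := boolP (del_edge e u v (phi v) (phi u)).
  case/negP: (del_edge_disconnects e_sym e_irr e_acyc euv).
  apply: connect_trans cu (connect_trans (connect1 D) _).
  by rewrite (sym_connect_sym (del_edge_sym e_sym u v)).
rewrite /del_edge phi_e evu /= negbK => /orP [/andP [/eqP vu /eqP uv]|/andP [/eqP vu _]].
  by move: (noflip (v, u)); rewrite /= evu vu uv !eqxx.
by move: (nofix v); rewrite vu eqxx.
Qed.

Lemma swap_automorphism (psi : {perm T}) (X Y : {set T}) :
  automorphism e psi -> [disjoint X & Y] -> psi @: X = Y ->
  (forall u v, (u \in X) || (u \in Y) -> ~~ ((v \in X) || (v \in Y)) -> e u v -> psi v = v) ->
  {in X & Y, forall u v, e u v = e (psi u) (psi^-1 v)%g} ->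
  exists2 sg : {perm T}, automorphism e sg &
    {in X, forall a, sg a = psi a} /\ {in Y, forall b, sg b = (psi^-1)%g b}.
Proof.
move=> psi_e dXY psiX out_fixed XY_e.
have psiV_e := automorphismV psi_e.
have XY a : a \in X -> psi a \in Y by move=> aX; rewrite -psiX imset_f.
have YX b : b \in Y -> (psi^-1)%g b \in X by rewrite -psiX => /imsetP [a aX ->]; rewrite permK.
have YnX a : a \in Y -> (a \in X) = false by move=> aY; apply: (disjointFl dXY aY).
pose g v := if v \in X then psi v else if v \in Y then (psi^-1)%g v else v.
have gK : involutive g.
  move=> v; rewrite /g; have [vX|vX] := boolP (v \in X).
    by rewrite (YnX _ (XY _ vX)) (XY _ vX) permK.
  have [vY|vY] := boolP (v \in Y); first by rewrite YX // permKV.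
  by rewrite (negbTE vX) (negbTE vY).
exists (perm (inv_inj gK)); last by split => a aX; rewrite permE /g ?aX // YnX.
have g_e u v : (u \in X) || (u \in Y) -> e (g u) (g v) = e u v.
  rewrite /g; have [uX|uX] := boolP (u \in X) => /= [_|uY].
    have [vX|vX] := boolP (v \in X); first by rewrite psi_e.
    have [vY|vY] := boolP (v \in Y); first by rewrite -XY_e.
    have vN : ~~ ((v \in X) || (v \in Y)) by rewrite negb_or vX vY.
    apply/idP/idP => E; last by rewrite -(out_fixed u v _ vN E) ?uX // psi_e.
    by rewrite -psi_e (out_fixed (psi u) v _ vN E) // XY ?orbT.
  rewrite uY; have [vX|vX] := boolP (v \in X); first by rewrite e_sym -XY_e // e_sym.
  have [vY|vY] := boolP (v \in Y); first by rewrite psiV_e.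
  have vN : ~~ ((v \in X) || (v \in Y)) by rewrite negb_or vX vY.
  apply/idP/idP => E.
    by rewrite -(permKV psi u) -(out_fixed (psi^-1 u)%g v _ vN E) ?YX // psi_e.
  have psiv : (psi^-1)%g v = v by rewrite -{1}(out_fixed u v _ vN E) ?uY ?orbT // permK.
  by rewrite -psiv psiV_e.
move=> u v; rewrite !permE.
have [uXY|uN] := boolP ((u \in X) || (u \in Y)); first exact: g_e.
have [vXY|vN] := boolP ((v \in X) || (v \in Y)); first by rewrite e_sym g_e // e_sym.
by move: uN vN; rewrite /g !negb_or => /andP [/negbTE -> /negbTE ->] /andP [/negbTE -> /negbTE ->].
Qed.

Lemma path_first_fixed (psi : {perm T}) a q : path e a q -> psi a != a ->
  psi (last a q) = last a q ->
  exists u w, [/\ e u w, psi w = w, psi u != u & connect (del_vertex e w) a u].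
Proof.
elim: q a => [|b q IH] a /=; first by move=> _ /eqP.
move=> /andP [eab pq] psia psil; have [psib|psib] := eqVneq (psi b) b.
  by exists a, b; split => //; apply: connect0.
have [u [w [euw psiw psiu bu]]] := IH b pq psib psil.
exists u, w; split => //; apply: connect_trans bu; apply: connect1.
rewrite /del_vertex eab /=; apply/andP.
by split; [apply: contraNneq psia | apply: contraNneq psib] => ->; rewrite psiw.
Qed.

Lemma component_del_vertex_closed w u x v : u != w ->
  x \in component (del_vertex e w) u -> e x v -> v != w ->
  v \in component (del_vertex e w) u.
Proof.
move=> uw; rewrite !inE => ux exv vw; apply: (connect_trans ux (connect1 _)).
by rewrite /del_vertex exv vw (connect_del_vertex_neq ux uw).
Qed.

Lemma swap_across_fixed_vertex (psi : {perm T}) a w :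
  automorphism e psi -> psi w = w -> psi a != a ->
  exists2 sg : {perm T}, automorphism e sg & sg a = psi a /\ sg (psi a) = a.
Proof.
move=> psi_e psiw psia; have /connectP [p pp lp] := e_conn a w.
have psil : psi (last a p) = last a p by rewrite -lp.
move: (path_first_fixed pp psia psil) => {w psiw lp} [u [w [euw psiw psiu au]]].
pose X := component (del_vertex e w) u; pose Y := component (del_vertex e w) (psi u).
have psiX : psi @: X = Y by apply: component_perm; apply: del_vertex_perm.
have uw : u != w by apply: contraTneq euw => ->; rewrite e_irr.
have psiuw : psi u != w by rewrite -psiw (inj_eq perm_inj).
have ewu : e w u by rewrite e_sym.
have ewpsiu : e w (psi u) by rewrite -{1}psiw psi_e.
have nXY : ~~ connect (del_vertex e w) u (psi u).
  by apply: del_vertex_disconnects; rewrite // eq_sym.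
have dj : [disjoint X & Y].
  apply/pred0P => z /=; rewrite !inE; apply/negP => /andP [uz psiuz].
  case/negP: nXY; apply: connect_trans uz _.
  by rewrite (sym_connect_sym (del_vertex_sym e_sym w)).
have noXY : {in X & Y, forall x y, e x y = false}.
  move=> x y xX yY; apply/negP => exy.
  have yw : y != w by move: yY; rewrite inE => /connect_del_vertex_neq; apply.
  by move: (disjointFl dj yY); rewrite (component_del_vertex_closed uw xX exy yw).
have out_fixed x v : (x \in X) || (x \in Y) -> ~~ ((v \in X) || (v \in Y)) ->
    e x v -> psi v = v.
  move=> xXY vN exv; apply/eqP; apply: contraNT vN => psiv.
  have vw : v != w by apply: contraNneq psiv => ->; rewrite psiw.
  case/orP: xXY => [xX|xY]; apply/orP; [left|right];
    exact: component_del_vertex_closed exv vw.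
have XY_e : {in X & Y, forall x v, e x v = e (psi x) (psi^-1 v)%g}.
  move=> x v xX vY; have psixY : psi x \in Y by rewrite -psiX imset_f.
  have psivX : (psi^-1 v)%g \in X.
    by move: vY; rewrite -psiX => /imsetP [z zX ->]; rewrite permK.
  by rewrite noXY // e_sym noXY.
have [sg sg_e [sgX sgY]] := swap_automorphism psi_e dj psiX out_fixed XY_e.
have aX : a \in X by rewrite inE (sym_connect_sym (del_vertex_sym e_sym w)).
have psiaY : psi a \in Y by rewrite -psiX imset_f.
by exists sg => //; rewrite sgX // sgY // permK.
Qed.

Lemma del_edgeC c d : del_edge e d c =2 del_edge e c d.
Proof. by move=> a b; rewrite /del_edge orbC. Qed.

Lemma del_edge_cover c d v : connect (del_edge e c d) c v || connect (del_edge e c d) d v.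
Proof.
have /connectP [p pp ->] := e_conn c v.
elim/last_ind: p pp => [|p y IH]; first by rewrite connect0.
rewrite rcons_path last_rcons => /andP [/IH {}IH ey].
have [D|] := boolP (del_edge e c d (last c p) y).
  by case/orP: IH => end_p; apply/orP; [left|right]; apply: connect_trans end_p (connect1 D).
by rewrite /del_edge ey negbK => /orP [] /andP [_ /eqP ->]; rewrite connect0 ?orbT.
Qed.

Lemma swap_across_flipped_edge (psi : {perm T}) a c d :
  automorphism e psi -> e c d -> psi c = d -> psi d = c ->
  exists2 sg : {perm T}, automorphism e sg & sg a = psi a /\ sg (psi a) = a.
Proof.
move=> psi_e ecd psic psid.
wlog ca : c d ecd psic psid / connect (del_edge e c d) c a.
  move=> W; case/orP: (del_edge_cover c d a) => [ca|da]; first exact: W ca.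
  apply: (W d c) => //; first by rewrite e_sym.
  by rewrite (eq_connect (del_edgeC c d)).
pose X := component (del_edge e c d) c; pose Y := component (del_edge e c d) d.
have psiX : psi @: X = Y by rewrite component_perm ?psic //; apply: del_edge_perm.
have ncd := del_edge_disconnects e_sym e_irr e_acyc ecd.
have cd_connect_sym := sym_connect_sym (del_edge_sym e_sym c d).
have cross : {in X & Y, forall x y, e x y = (x == c) && (y == d)}.
  move=> x y; rewrite !inE => cx dy; apply/idP/idP => [exy|/andP [/eqP -> /eqP ->] //].
  have [D|] := boolP (del_edge e c d x y).
    case/negP: ncd; apply: connect_trans cx (connect_trans (connect1 D) _).
    by rewrite cd_connect_sym.
  rewrite /del_edge exy /= negbK => /orP [//|/andP [/eqP xd _]].
  by move: cx; rewrite xd (negbTE ncd).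
have dj : [disjoint X & Y].
  apply/pred0P => z /=; rewrite !inE; apply/negP => /andP [cz dz].
  by case/negP: ncd; apply: connect_trans cz _; rewrite cd_connect_sym.
have out_fixed x v : (x \in X) || (x \in Y) -> ~~ ((v \in X) || (v \in Y)) ->
    e x v -> psi v = v.
  by move=> _; rewrite !inE del_edge_cover.
have XY_e : {in X & Y, forall x v, e x v = e (psi x) (psi^-1 v)%g}.
  move=> x v xX vY; have psixY : psi x \in Y by rewrite -psiX imset_f.
  have psivX : (psi^-1 v)%g \in X.
    by move: vY; rewrite -psiX => /imsetP [z zX ->]; rewrite permK.
  have psivc : ((psi^-1)%g v == c) = (v == d).
    by rewrite -(inj_eq (@perm_inj _ psi)) permKV psic.
  have psixd : (psi x == d) = (x == c) by rewrite -psic (inj_eq perm_inj).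
  by rewrite cross // e_sym cross // psivc psixd andbC.
have [sg sg_e [sgX sgY]] := swap_automorphism psi_e dj psiX out_fixed XY_e.
have aX : a \in X by rewrite inE.
have psiaY : psi a \in Y by rewrite -psiX imset_f.
by exists sg => //; rewrite sgX // sgY // permK.
Qed.

Lemma automorphism_swap (psi : {perm T}) a : automorphism e psi ->
  exists2 sg : {perm T}, automorphism e sg & sg a = psi a /\ sg (psi a) = a.
Proof.
move=> psi_e; have [->|psia] := eqVneq (psi a) a.
  by exists 1%g => [x y|]; rewrite ?perm1.
have [[w psiw]|[c [d [ecd psic psid]]]] := automorphism_fix_or_flip a psi_e.
  exact: swap_across_fixed_vertex psiw psia.
exact: swap_across_flipped_edge ecd psic psid.
Qed.

End Tree.

Section ZeroForcing.
Variables (T : finType) (e : rel T).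

Lemma zf_step_sub (S : {set T}) : S \subset zf_step e S. Proof. exact: subsetUl. Qed.

Lemma sub_iter_zf_step (S : {set T}) k : S \subset iter k (zf_step e) S.
Proof. by elim: k => //= k IH; apply: subset_trans IH (zf_step_sub _). Qed.

Section ForcingChains.
Variables (S : {set T}) (n : nat).
Hypothesis S_zf : iter n (zf_step e) S = setT.
Let active k := iter k (zf_step e) S.

Lemma exists_active v : exists k, v \in active k.
Proof. by exists n; rewrite /active S_zf inE. Qed.

Definition activation v := ex_minn (exists_active v).

Lemma activation_active v : v \in active (activation v).
Proof. by rewrite /activation; case: ex_minnP. Qed.

Lemma activation_min v k : v \in active k -> activation v <= k.
Proof. by rewrite /activation; case: ex_minnP => m _ m_min /m_min. Qed.

Lemma activation_le v : activation v <= n.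
Proof. by apply: activation_min; rewrite /active S_zf inE. Qed.

Lemma activation0 v : (v \in S) = (activation v == 0).
Proof.
apply/idP/idP => [vS|/eqP t0]; first by rewrite -leqn0; apply: activation_min.
by have := activation_active v; rewrite t0.
Qed.

Lemma activation_gt0 v : v \notin S -> 0 < activation v.
Proof. by rewrite lt0n -activation0. Qed.

Definition forces v u := [&& u \in active (activation v).-1, e u v &
  [forall w, (e u w && (w \notin active (activation v).-1)) ==> (w == v)]].

Definition forcer v := odflt v [pick u | forces v u].

Lemma forcer_spec v : v \notin S -> forces v (forcer v).
Proof.
move=> vS; have [u u_forces] : exists u, forces v u.
  have := activation_active v; rewrite -(prednK (activation_gt0 vS)) /active iterS.
  rewrite -/(active _) /zf_step in_setU => /orP [v_act|].
    by have := activation_min v_act; rewrite -ltnS prednK ?activation_gt0 // ltnn.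
  rewrite inE => /existsP [u /and3P [u_act euv /andP [_ u_only]]].
  by exists u; rewrite /forces u_act euv u_only.
by rewrite /forcer; case: pickP => [//|none]; rewrite none in u_forces.
Qed.

Lemma forcer_lt v : v \notin S -> activation (forcer v) < activation v.
Proof.
move=> vS; case/and3P: (forcer_spec vS) => /activation_min.
by rewrite -ltnS prednK ?activation_gt0.
Qed.

Lemma forcer_edge v : v \notin S -> e (forcer v) v.
Proof. by move=> vS; case/and3P: (forcer_spec vS). Qed.

Lemma forcer_inj v v' : v \notin S -> v' \notin S -> forcer v = forcer v' -> v = v'.
Proof.
wlog le_vv' : v v' / activation v <= activation v'.
  move=> W vS v'S fvv'; case/orP: (leq_total (activation v) (activation v')) => le.
    exact: W.
  by apply/esym/W.
move=> vS v'S fvv'; have v_gt0 := activation_gt0 vS.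
have v'_inactive : v' \notin active (activation v).-1.
  by apply/negP => /activation_min; lia.
case/and3P: (forcer_spec vS) => _ _ /forallP /(_ v') /implyP only_v.
by apply/esym/eqP/only_v; rewrite fvv' forcer_edge.
Qed.

Definition forced u := [pick v | (v \notin S) && (forcer v == u)].

Lemma forced_some u v : forced u = Some v -> v \notin S /\ forcer v = u.
Proof. by rewrite /forced; case: pickP => // v' /andP [v'S /eqP fv'] [<-]. Qed.

Lemma forced_forcer v : v \notin S -> forced (forcer v) = Some v.
Proof.
move=> vS; rewrite /forced; case: pickP => [v' /andP [v'S /eqP fv']|none].
  by rewrite (forcer_inj v'S vS fv').
by move: (none v); rewrite vS eqxx.
Qed.

Fixpoint chain (k : nat) (u : T) : seq T :=
  if k is k'.+1 then (if forced u is Some v then v :: chain k' v else [::]) else [::].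

Lemma chain_activation k u v : v \in chain k u -> activation u < activation v.
Proof.
elim: k u => //= k IH u; case E: (forced u) => [v'|] //.
have [v'S fv'] := forced_some E.
have lt1 : activation u < activation v' by rewrite -fv' forcer_lt.
rewrite inE => /orP [/eqP ->//|/IH]; exact: ltn_trans.
Qed.

Lemma chain_path k u : path e u (chain k u).
Proof.
elim: k u => //= k IH u; case E: (forced u) => [v'|] //=.
have [v'S fv'] := forced_some E; by rewrite -{1}fv' forcer_edge // IH.
Qed.

Lemma chain_uniq k u : uniq (u :: chain k u).
Proof.
elim: k u => [//|k IH] u; rewrite cons_uniq; apply/andP; split.
  by apply/negP => /chain_activation; rewrite ltnn.
rewrite /=; case: (forced u) => [v'|] //; exact: IH.
Qed.

Lemma chain_notin k u v : v \in chain k u -> v \notin S.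
Proof.
elim: k u => //= k IH u; case E: (forced u) => [v'|] //.
have [v'S fv'] := forced_some E; rewrite inE => /orP [/eqP ->//|]; exact: IH.
Qed.

Lemma chain_forcer k u v : v \in chain k u -> forcer v \in u :: chain k u.
Proof.
elim: k u => //= k IH u; case E: (forced u) => [v'|] //.
have [_ fv'] := forced_some E; rewrite !inE => /orP [/eqP ->|/IH]; first by rewrite fv' eqxx.
by rewrite inE => ->; rewrite orbT.
Qed.

Lemma chain_forced k u a v : a \in u :: chain k u -> forced a = Some v -> v \in chain k.+1 u.
Proof.
elim: k u => [|k IH] u.
  by rewrite /= inE => /eqP -> /= ->; rewrite inE.
rewrite inE => /orP [/eqP -> E|]; first by rewrite /= E inE eqxx.
rewrite [chain k.+1 u]/=; case E: (forced u) => [v'|] // a_in fa.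
by rewrite [chain k.+2 u]/= E inE (IH v' a_in fa) orbT.
Qed.

Lemma chain_mono k k' u : k <= k' -> {subset chain k u <= chain k' u}.
Proof.
elim: k k' u => // k IH [|k'] u //= le; case: (forced u) => [v'|] // z.
by rewrite !inE => /orP [->//|/(IH _ _ le) ->]; rewrite orbT.
Qed.

Lemma chain_reaches v : exists2 s, s \in S & v \in s :: chain (activation v) s.
Proof.
have [m] := ubnP (activation v); elim: m v => // m IH v /ltnSE le_m.
have [vS|vS] := boolP (v \in S).
  by exists v; rewrite ?mem_head.
have lt_fv := forcer_lt vS.
have [s sS fv_s] := IH (forcer v) (leq_trans lt_fv le_m).
exists s => //; rewrite inE; apply/orP; right.
exact: chain_mono lt_fv _ (chain_forced fv_s (forced_forcer vS)).
Qed.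

Lemma chain_cover v : exists2 s, s \in S & v \in s :: chain n s.
Proof.
have [s sS v_s] := chain_reaches v; exists s => //; move: v_s.
by rewrite !inE => /orP [->//|/(chain_mono (activation_le v)) ->]; rewrite orbT.
Qed.

Lemma chain_root_unique v s s' : s \in S -> s' \in S ->
  v \in s :: chain n s -> v \in s' :: chain n s' -> s = s'.
Proof.
move=> sS s'S; have [m] := ubnP (activation v); elim: m v => // m IH v /ltnSE le_m.
have [vS|vS] := boolP (v \in S).
  rewrite !inE => /orP [/eqP <-|/chain_notin]; last by rewrite vS.
  by move/orP => [/eqP//|/chain_notin]; rewrite vS.
rewrite !inE => /orP [/eqP vs|v_s]; first by rewrite -vs (negbTE vS) in sS.
move/orP => [/eqP vs|v_s']; first by rewrite -vs (negbTE vS) in s'S.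
by apply: (IH (forcer v)); rewrite ?chain_forcer // (leq_trans (forcer_lt vS) le_m).
Qed.

End ForcingChains.

Lemma zero_forcing_path_cover (S : {set T}) : zero_forcing e S ->
  exists Q, path_cover e Q /\ size Q = #|S|.
Proof.
case=> n S_zf.
exists [seq s :: chain S_zf n s | s <- enum S]; split; last by rewrite size_map cardE.
split; [|split].
- move=> q /mapP [s _ ->]; by rewrite /graph_path chain_uniq chain_path.
- apply: uniq_flatten_map; first exact: enum_uniq.
    by move=> x _; apply: chain_uniq.
  by move=> x y z; rewrite !mem_enum => xS yS /chain_root_unique; apply.
- move=> v; have [s sS v_s] := chain_cover S_zf v.
  by apply/flatten_mapP; exists s => //; rewrite mem_enum.
Qed.

End ZeroForcing.

Lemma iter_extensive_fixpoint (T : finType) (g : {set T} -> {set T}) (S : {set T}) :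
  (forall A : {set T}, A \subset g A) -> exists k, g (iter k g S) = iter k g S.
Proof.
move=> g_ext.
have grow k : (exists j, g (iter j g S) = iter j g S) \/ k <= #|iter k g S|.
  elim: k => [|k [fix_j|IH]]; [by right | by left |].
  have [fix_k|nfix_k] := eqVneq (g (iter k g S)) (iter k g S); first by left; exists k.
  right; rewrite iterS; apply: leq_ltn_trans IH (proper_card _).
  by rewrite properEneq eq_sym nfix_k g_ext.
by case: (grow #|T|.+1) => // /leq_trans /(_ (max_card _)); rewrite ltnn.
Qed.

Section PathCoverHeads.
Variables (T : finType) (e : rel T).
Hypotheses (e_sym : symmetric e) (e_irr : irreflexive e) (e_acyc : acyclic_graph e).
Variables (P : seq (seq T)) (x0 : T).
Hypothesis P_cover : path_cover e P.

Definition heads := [set v | v \in map (head x0) P].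

Lemma cover_disjoint (p : seq T) q v : p \in P -> q \in P -> v \in p -> v \in q -> p = q.
Proof.
case: P_cover => _ [uP _]; elim: P uP => //= p0 P' IH.
rewrite cat_uniq => /and3P [_ p0_disj u'].
have nh : v \in flatten P' -> v \in p0 -> False.
  by move=> vf vp0; case/negP: p0_disj; apply/hasP; exists v.
rewrite !inE => /orP [/eqP ->|pP] /orP [/eqP ->|qP] // vp vq.
- by exfalso; apply: nh vp; apply/flattenP; exists q.
- by exfalso; apply: nh vq; apply/flattenP; exists p.
exact: IH.
Qed.

Lemma cover_graph_path (p : seq T) : p \in P -> graph_path e p.
Proof. by case: P_cover => P_paths _; apply: P_paths. Qed.

Lemma cover_path_uniq (p : seq T) : p \in P -> uniq p.
Proof. by move/cover_graph_path; case: p => // h t /andP []. Qed.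

Lemma cover_path_edge (p : seq T) k :
  p \in P -> k.+1 < size p -> e (nth x0 p k) (nth x0 p k.+1).
Proof.
move/cover_graph_path; case: p => //= h t /andP [_ /(pathP x0) p_edge] k_lt.
exact: p_edge.
Qed.

Definition path_of v := nth [::] P (find (fun p => v \in p) P).

Lemma path_of_spec v : path_of v \in P /\ v \in path_of v.
Proof.
case: P_cover => _ [_ cov]; have /flattenP [p pP vp] := cov v.
have hs : has (fun p => v \in p) P by apply/hasP; exists p.
split; first by rewrite /path_of; apply: mem_nth; rewrite -has_find.
exact: (nth_find [::] hs).
Qed.

Lemma path_of_eq (p : seq T) v : p \in P -> v \in p -> path_of v = p.
Proof. by move=> pP vp; have [pv_P v_in] := path_of_spec v; apply: cover_disjoint v_in vp. Qed.

Section Stalled.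
Variable F : {set T}.
Hypotheses (F_stalled : zf_step e F = F) (heads_F : heads \subset F).

Lemma stalled_branching u v : u \in F -> v \notin F -> e u v ->
  exists w, [&& w \notin F, e u w & w != v].
Proof.
move=> uF vF euv.
have [forces_v|] := boolP [forall w, (e u w && (w \notin F)) ==> (w == v)].
  case/negP: (vF); rewrite -F_stalled /zf_step in_setU inE.
  by apply/orP; right; apply/existsP; exists u; rewrite uF euv vF forces_v.
case/forallPn => w; rewrite negb_imply => /andP [/andP [euw wF] wv].
by exists w; rewrite wF euw wv.
Qed.

Definition first_inactive (p : seq T) := find (fun z => z \notin F) p.

Lemma first_inactive_gt0 (p : seq T) : p \in P -> 0 < first_inactive p.
Proof.
move=> pP; have := cover_graph_path pP; case: p pP => //= h t pP _.
have hF : h \in F by apply: (subsetP heads_F); rewrite inE; apply/mapP; exists (h :: t).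
by rewrite hF.
Qed.

Lemma before_first_inactive (p : seq T) k : k < first_inactive p -> nth x0 p k \in F.
Proof. by move/(before_find x0)/negbT; rewrite negbK. Qed.

Lemma nth_first_inactive (p : seq T) :
  first_inactive p < size p -> nth x0 p (first_inactive p) \notin F.
Proof. by rewrite -has_find => /(nth_find x0). Qed.

Lemma first_inactive_le_index (p : seq T) z :
  z \in p -> z \notin F -> first_inactive p <= index z p.
Proof.
move=> zp zF; rewrite leqNgt; apply/negP => /before_first_inactive.
by rewrite nth_index // (negbTE zF).
Qed.

Definition unfinished := [pred v | first_inactive (path_of v) < size (path_of v)].

Definition detour (p : seq T) :=
  odflt x0 [pick z | [&& z \notin F, e (nth x0 p (first_inactive p).-1) z &
                         z != nth x0 p (first_inactive p)]].

Lemma detour_spec (p : seq T) : p \in P -> first_inactive p < size p ->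
  [&& detour p \notin F, e (nth x0 p (first_inactive p).-1) (detour p) &
      detour p != nth x0 p (first_inactive p)].
Proof.
move=> pP j_lt; have j_gt0 := first_inactive_gt0 pP.
have uF : nth x0 p (first_inactive p).-1 \in F by apply: before_first_inactive; rewrite prednK.
have euv : e (nth x0 p (first_inactive p).-1) (nth x0 p (first_inactive p)).
  by have := cover_path_edge pP (k := (first_inactive p).-1); rewrite prednK //; apply.
have [w w_spec] := stalled_branching uF (nth_first_inactive j_lt) euv.
by rewrite /detour; case: pickP => [z //|none]; rewrite none in w_spec.
Qed.

(* Forward along the active prefix of a path, then off to the second inactive
   neighbour of its last active vertex, which exists because F is stalled, and
   backward along the rest: a walk that never backtracks, see stalled_full. *)
Definition walk_step v :=
  let p := path_of v in let j := index v p in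
  if j.+1 < first_inactive p then nth x0 p j.+1
  else if j.+1 == first_inactive p then detour p else nth x0 p j.-1.

Lemma walk_step_nth (p : seq T) k : p \in P -> k < size p ->
  walk_step (nth x0 p k) =
    if k.+1 < first_inactive p then nth x0 p k.+1
    else if k.+1 == first_inactive p then detour p else nth x0 p k.-1.
Proof.
move=> pP k_lt; rewrite /walk_step (path_of_eq pP (mem_nth x0 k_lt)) index_uniq //.
exact: cover_path_uniq.
Qed.

Lemma unfinished_nth (p : seq T) k : p \in P -> first_inactive p < size p -> k < size p ->
  nth x0 p k \in unfinished.
Proof. by move=> pP j_lt k_lt; rewrite inE (path_of_eq pP (mem_nth x0 k_lt)). Qed.

Lemma unfinished_inactive z : z \notin F -> z \in unfinished.
Proof.
move=> zF; have [_ z_in] := path_of_spec z; rewrite inE.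
by apply: leq_ltn_trans (first_inactive_le_index z_in zF) _; rewrite index_mem.
Qed.

Definition advances v :=
  [&& walk_step v \in unfinished, e v (walk_step v) & walk_step (walk_step v) != v].

Lemma advances_forward (p : seq T) k : p \in P -> first_inactive p < size p ->
  k.+1 < first_inactive p -> advances (nth x0 p k).
Proof.
move=> pP j_lt k_lt; have p_uniq := cover_path_uniq pP.
have k1_lt : k.+1 < size p by apply: ltn_trans j_lt.
rewrite /advances walk_step_nth ?k_lt ?unfinished_nth ?cover_path_edge //=; last exact: ltnW.
rewrite walk_step_nth //; case: ltnP => [k2_lt|k2_ge].
  have k2_lt' : k.+2 < size p := ltn_trans k2_lt j_lt.
  by rewrite nth_uniq //; [lia | exact: ltnW].
have -> : k.+2 == first_inactive p by rewrite eqn_leq k2_ge k_lt.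
have /and3P [zF _ _] := detour_spec pP j_lt.
by apply: contraNneq zF => ->; apply: before_first_inactive; lia.
Qed.

Lemma advances_detour (p : seq T) : p \in P -> first_inactive p < size p ->
  advances (nth x0 p (first_inactive p).-1).
Proof.
move=> pP j_lt; have j_gt0 := first_inactive_gt0 pP; have p_uniq := cover_path_uniq pP.
have /and3P [zF ewz zn] := detour_spec pP j_lt.
rewrite /advances walk_step_nth ?prednK ?eqxx ?ltnn //=; last exact: ltnW.
rewrite unfinished_inactive // ewz /=.
have [qP zq] := path_of_spec (detour p); move: (path_of _) qP zq => q qP zq.
have i_lt : index (detour p) q < size q by rewrite index_mem.
have i_ge := first_inactive_le_index zq zF; have jq_gt0 := first_inactive_gt0 qP.
rewrite -{1}(nth_index x0 zq) walk_step_nth //.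
move: (index _ q) (nth_index x0 zq) i_lt i_ge => i qi i_lt i_ge.
have -> : (i.+1 < first_inactive q) = false by apply/negbTE; lia.
have -> : (i.+1 == first_inactive q) = false by apply/negbTE; lia.
have i1_lt : i.-1 < size q := leq_ltn_trans (leq_pred i) i_lt.
have j1_lt : (first_inactive p).-1 < size p := leq_ltn_trans (leq_pred _) j_lt.
apply/eqP => E; have qp : q = p.
  by apply: (cover_disjoint qP pP (mem_nth x0 i1_lt)); rewrite E mem_nth.
subst q; move/eqP: E; rewrite nth_uniq // => /eqP ij.
by move: zn; rewrite -qi (_ : i = first_inactive p) ?eqxx //; lia.
Qed.

Lemma advances_backward (p : seq T) k : p \in P -> k < size p ->
  first_inactive p < k.+1 -> advances (nth x0 p k).
Proof.
move=> pP k_lt j_lt; have p_uniq := cover_path_uniq pP.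
have j_lt' : first_inactive p < size p by lia.
have k_gt0 : 0 < k by have := first_inactive_gt0 pP; lia.
rewrite /advances walk_step_nth // ifN ?ifN; try lia.
rewrite unfinished_nth //=; last by lia.
rewrite e_sym; have := cover_path_edge pP (k := k.-1); rewrite prednK // => -> //=.
rewrite walk_step_nth ?prednK //; last by lia.
have -> : (k < first_inactive p) = false by apply/negbTE; lia.
case: (eqVneq k (first_inactive p)) => [kj|kj].
  by have /and3P [_ _] := detour_spec pP j_lt'; rewrite kj.
have k2_lt : k.-2 < size p := leq_ltn_trans (leq_trans (leq_pred _) (leq_pred _)) k_lt.
by rewrite nth_uniq //; lia.
Qed.

Lemma advances_unfinished v : v \in unfinished -> advances v.
Proof.
move=> v_unf; have [pP vp] := path_of_spec v; rewrite -(nth_index x0 vp).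
have k_lt : index v (path_of v) < size (path_of v) by rewrite index_mem.
case: (ltngtP (index v (path_of v)).+1 (first_inactive (path_of v))) => [lt|gt|eq].
- exact: advances_forward.
- exact: advances_backward.
by rewrite -[index _ _]/((index v (path_of v)).+1.-1) eq advances_detour.
Qed.

Lemma stalled_full : F = setT.
Proof.
apply/setP => v0; rewrite inE; apply/negPn/negP => v0F.
apply: (no_nonbacktracking_map e_irr e_acyc (U := unfinished) (f := walk_step) (x := v0)).
- exact: unfinished_inactive.
- by move=> v /advances_unfinished /and3P [].
- by move=> v /advances_unfinished /and3P [].
- by move=> v /advances_unfinished /and3P [].
Qed.

End Stalled.

Lemma heads_zero_forcing : zero_forcing e heads.
Proof.
have [k k_fix] := iter_extensive_fixpoint heads (@zf_step_sub T e).
exists k; apply: (@stalled_full (iter k (zf_step e) heads)) => //.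
exact: sub_iter_zf_step.
Qed.

Lemma card_heads : #|heads| <= size P.
Proof.
rewrite (eq_card (_ : heads =i [seq head x0 p | p <- P])); last by move=> v; rewrite inE.
by rewrite -(size_map (head x0)); apply: card_size.
Qed.

End PathCoverHeads.

Lemma perm_orbit_reaches_exit (T : finType) (phi : {perm T}) (A B : {set T}) a b :
  phi @: A = B -> a \in A -> a \notin B -> B :\ b \subset A ->
  exists k, (phi ^+ k)%g a = b.
Proof.
move=> phiA aA aB BbA.
have step k : (exists j, (phi ^+ j)%g a = b) \/ (phi ^+ k.+1)%g a \in B.
  elim: k => [|k [hit|IH]]; [| by left |].
    by right; rewrite expg1 -phiA imset_f.
  have [hit|nhit] := eqVneq ((phi ^+ k.+1)%g a) b; first by left; exists k.+1.
  by right; rewrite expgSr permM -phiA imset_f // (subsetP BbA) // !inE nhit.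
case: (step #[phi]%g.-1) => //; rewrite prednK ?order_gt0 // expg_order perm1.
by rewrite (negbTE aB).
Qed.

Definition flip_path (T : eqType) (s : seq T) (P : seq (seq T)) : seq (seq T) :=
  [seq if q == s then rev q else q | q <- P].

Lemma graph_path_rev (T : finType) (e : rel T) s :
  symmetric e -> graph_path e s -> graph_path e (rev s).
Proof.
move=> e_sym; case: s => // h t /andP [s_uniq s_path].
rewrite lastI rev_rcons /graph_path -rev_rcons -lastI rev_uniq s_uniq rev_path.
by rewrite (@eq_path _ _ e) // => a b; rewrite e_sym.
Qed.

Lemma flip_path_cover (T : finType) (e : rel T) (P : seq (seq T)) s :
  symmetric e -> path_cover e P -> path_cover e (flip_path s P).
Proof.
move=> e_sym [P_paths [P_uniq P_all]].
have flat : perm_eq (flatten (flip_path s P)) (flatten P).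
  elim: P {P_paths P_uniq P_all} => //= q P IH; apply: perm_cat IH.
  by case: (q == s); rewrite ?perm_rev.
split; [|split]; last by move=> v; rewrite (perm_mem flat).
- move=> q /mapP [q' q'P ->]; case: (q' == s); last exact: P_paths.
  exact/graph_path_rev/P_paths.
by rewrite (perm_uniq flat).
Qed.

Lemma min_flip_path_cover (T : finType) (e : rel T) (P : seq (seq T)) s :
  symmetric e -> min_path_cover e P -> min_path_cover e (flip_path s P).
Proof.
move=> e_sym [P_cover P_min]; split; first exact: flip_path_cover.
by move=> Q; rewrite size_map; apply: P_min.
Qed.

Lemma min_zero_forcing_heads (T : finType) (e : rel T) (P : seq (seq T)) (x0 : T) :
  symmetric e -> irreflexive e -> acyclic_graph e -> min_path_cover e P ->
  min_zero_forcing e (heads P x0).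
Proof.
move=> e_sym e_irr e_acyc [P_cover P_min]; split; first exact: heads_zero_forcing.
move=> S /zero_forcing_path_cover [Q [Q_cover <-]].
exact: leq_trans (card_heads P x0) (P_min Q Q_cover).
Qed.

Lemma heads_flip_path_sub (T : finType) (P : seq (seq T)) (s : seq T) (x0 : T) :
  heads (flip_path s P) x0 :\ last x0 s \subset heads P x0.
Proof.
apply/subsetP => v; rewrite !inE => /andP [vb /mapP [_ /mapP [q qP ->] vE]].
subst v; have [qs|qs] := eqVneq q s; last exact: map_f.
by move: vb; rewrite qs eqxx head_rev eqxx.
Qed.

Lemma head_notin_heads_flip_path (T : finType) (e : rel T) (P : seq (seq T)) (s : seq T) (x0 : T) :
  path_cover e P -> s \in P -> head x0 s != last x0 s ->
  head x0 s \notin heads (flip_path s P) x0.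
Proof.
move=> P_cover sP ab; rewrite inE; apply/mapP => [[_ /mapP [q qP ->]]].
case: eqP => [->|/eqP qs] /=; first by rewrite head_rev; apply/eqP.
move=> sq; case/eqP: qs; apply: (cover_disjoint P_cover qP sP (v := head x0 s)).
  by rewrite sq; apply/head_graph_path/(cover_graph_path P_cover qP).
exact/head_graph_path/(cover_graph_path P_cover sP).
Qed.

Lemma min_path_cover_ends_swap (T : finType) (e : rel T) (P : seq (seq T)) (s : seq T) (x0 : T) :
  is_tree e -> iso_unique_zf e -> min_path_cover e P -> s \in P ->
  exists2 sg : {perm T}, automorphism e sg &
    sg (head x0 s) = last x0 s /\ sg (last x0 s) = head x0 s.
Proof.
move=> [[e_sym e_irr] e_conn e_acyc] iso_zf P_min sP.
have [ab|ab] := eqVneq (head x0 s) (last x0 s).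
  by exists 1%g => [a b|]; rewrite ?perm1.
have [phi phi_e phiA] := iso_zf _ _ (min_zero_forcing_heads x0 e_sym e_irr e_acyc P_min)
  (min_zero_forcing_heads x0 e_sym e_irr e_acyc (min_flip_path_cover s e_sym P_min)).
have [k phik] : exists k, (phi ^+ k)%g (head x0 s) = last x0 s.
  apply: perm_orbit_reaches_exit phiA _ _ (heads_flip_path_sub P s x0).
    by rewrite inE map_f.
  by case: P_min => P_cover _; apply: (head_notin_heads_flip_path P_cover).
have [sg sg_e] := automorphism_swap e_sym e_irr e_acyc e_conn (head x0 s) (automorphismX k phi_e).
by rewrite phik; exists sg.
Qed.

Lemma automorphism_rev_path (T : finType) (e : rel T) (sg : {perm T}) s x0 :
  symmetric e -> irreflexive e -> acyclic_graph e -> automorphism e sg ->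
  graph_path e s -> sg (head x0 s) = last x0 s -> sg (last x0 s) = head x0 s ->
  map sg s = rev s.
Proof.
move=> e_sym e_irr e_acyc sg_e; case: s => // h t /andP [s_uniq s_path] sgh sgl.
rewrite /= in sgh sgl; rewrite [in rev _]lastI rev_rcons /= sgh; congr (_ :: _).
apply: (acyclic_path_unique e_sym e_irr e_acyc (a := last h t)).
- by rewrite -sgh -map_cons map_inj_uniq //; apply: perm_inj.
- by rewrite -sgh; apply: homo_path s_path => a b; rewrite sg_e.
- by rewrite -rev_rcons -lastI rev_uniq.
- by rewrite rev_path (@eq_path _ _ e) // => a b; rewrite e_sym.
have := congr1 (last x0) (rev_cons h t).
rewrite [in rev _]lastI rev_rcons last_rcons /= => ->.
by rewrite -{1}sgh last_map sgl.
Qed.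

Lemma min_path_cover_reversal (T : finType) (e : rel T) (P : seq (seq T)) (s : seq T) (x0 : T) :
  is_tree e -> iso_unique_zf e -> min_path_cover e P -> s \in P ->
  exists2 sg : {perm T}, automorphism e sg & map sg s = rev s.
Proof.
move=> e_tree iso_zf P_min sP.
have [sg sg_e [sg_head sg_last]] := min_path_cover_ends_swap x0 e_tree iso_zf P_min sP.
have [[e_sym e_irr] _ e_acyc] := e_tree.
have s_path : graph_path e s by case: P_min => [[/(_ s sP)]].
by exists sg; last exact: automorphism_rev_path sg_head sg_last.
Qed.

Unset Implicit Arguments.

Theorem lemma3p9 (T : finType) (e : rel T) (P : seq (seq T)) (s : seq T) (x0 : T) :
  is_tree e -> iso_unique_zf e -> min_path_cover e P -> s \in P ->
  let l := size s in
  let x := fun i => nth x0 s i.-1 in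
  let p := if odd l then l.+1./2 else l./2 in
  (odd l -> 3 <= l ->
     iso_induced e (component (del_vertex e (x p)) (x p.-1))
                   (component (del_vertex e (x p)) (x p.+1))) /\
  (~~ odd l ->
     iso_induced e (component (del_edge e (x p) (x p.+1)) (x p))
                   (component (del_edge e (x p) (x p.+1)) (x p.+1))) /\
  (exists2 phi : {perm T}, automorphism e phi & phi (x 1) = x l /\ phi (x l) = x 1).
Proof.
move=> e_tree iso_zf P_min sP l x p.
have [sg sg_e sg_s] := min_path_cover_reversal x0 e_tree iso_zf P_min sP.
have l_gt0 : 0 < l by case: P_min => [[/(_ s sP)]]; rewrite /l; case: (s).
have sg_x i : 0 < i <= l -> sg (x i) = x (l.+1 - i).
  case/andP => i_gt0 i_le; have i1_lt : i.-1 < size s by rewrite prednK.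
  rewrite /x -(nth_map x0 x0 sg i1_lt) sg_s nth_rev ?size_map //.
  by congr nth; rewrite prednK // subSn.
have l_half := odd_double_half l; rewrite -addnn in l_half.
split; [|split].
- move=> l_odd l_ge3; rewrite l_odd /= in l_half.
  have p_eq : p = (l./2).+1 by rewrite /p l_odd -[l.+1./2]/(uphalf l) uphalf_half l_odd.
  have -> : x p.+1 = sg (x p.-1) by rewrite sg_x; [congr x|]; lia.
  apply: iso_induced_component => //; apply: del_vertex_perm => //.
  by rewrite sg_x; [congr x|]; lia.
- move=> l_even; rewrite (negbTE l_even) /= in l_half.
  have p_eq : p = l./2 by rewrite /p (negbTE l_even).
  have sg_p : sg (x p) = x p.+1 by rewrite sg_x; [congr x|]; lia.
  have sg_p1 : sg (x p.+1) = x p by rewrite sg_x; [congr x|]; lia.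
  by rewrite -{3}sg_p; apply: iso_induced_component => //; apply: del_edge_perm.
- exists sg => //; rewrite !sg_x ?l_gt0 ?leqnn //.
  by rewrite subn1 subSnn.
Qed.
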